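(* Let $\Omega>0$ denote the maximum absolute value of the stored quantities, let $C$ be the column index of a scalar (stored in $X[1,C]$) in $X\in\mathbb{R}^{K\times d}$, and let $D$ be the column index of a column. Then there exists a single transformer layer that simulates the repeat-addition operation $X[:,D]\leftarrow\mathbf 1_K\cdot X[1,C]+X[:,D]$.
   Context: Conventions: rows/columns indexed from $1$; $X[i,j]$ is the $(i,j)$ entry, $X[:,j]$ the $j$-th column; $\mathbf 1_K$ is the all-ones vector of length $K$. $\phi(x)=\max\{x,0\}$ entrywise. Hardmax $\sigma$: row $i$ of $\sigma(\Phi)$ is $\frac{1}{|S_i|}\sum_{k\in S_i}e_k$, $S_i=\{k:\Phi_{ik}=\max_j\Phi_{ij}\}$. Positional encoding: $\widehat\delta>0$ the nearest representable approximation of the minimum increment angle, $R_{\widehat\delta}=\begin{bmatrix}\cos\widehat\delta&-\sin\widehat\delta\\ \sin\widehat\delta&\cos\widehat\delta\end{bmatrix}$, $p_0=(0,1)^\top$, $p_i=R_{\widehat\delta}^\top p_{i-1}$. For a weighted hypergraph with incident matrix $A\in\mathbb{R}^{n_v\times n_e}$ ($A_{ij}=w(e_j)$ if vertex $v_i\in e_j$, else $0$) and $K\ge\max\{n_v,n_e\}+1$, the padded incident matrix $\widetilde A\in\mathbb{R}^{K\times K}$ has $\widetilde A_{i+1,j+1}=A_{ij}$, zeros elsewhere. A transformer layer on $X\in\mathbb{R}^{K\times d}$ is $f(X,\widetilde A)=f_{\mathrm{mlp}}(f_{\mathrm{attn}}(X,\widetilde A))$, $f_{\mathrm{attn}}(X,\widetilde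 A)=\sum_{i\in M_A}\psi^{(i)}(X,\widetilde A)+\sum_{i\in M_{A^\top}}\psi^{(i)}(X,\widetilde A^\top)+\sum_{i\in M}\psi^{(i)}(X,I_K)+X$, $\psi(X,B)=B\,\sigma(XW_QW_K^\top X^\top)XW_V$ ($W_Q,W_K\in\mathbb{R}^{d\times2}$, $W_V\in\mathbb{R}^{d\times d}$), $f_{\mathrm{mlp}}(X)=Z^{(4)}W^{(4)}+X$, $Z^{(1)}=X$, $Z^{(j+1)}=\phi(Z^{(j)}W^{(j)})$ ($j=1,2,3$). Storage convention: scalars in the top row of a column (rest $0$), arrays of length $K-1$ in rows $2,\dots,K$ (top $0$); designated columns $B_{\mathrm{global}}$ (top $1$, rest $0$), $B_{\mathrm{local}}$ (top $0$, rest $1$), positional columns $P_1,P_2$ (array position $i$ holds $p_i^{(1)},p_i^{(2)}$), and scratchpad columns. ''Simulating an operation'' means the layer's weights can be chosen so that applying it to $X$ performs the stated update. *)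

From HB Require Import structures.
From mathcomp Require Import all_boot all_order all_algebra.
From mathcomp Require Import reals.
Set Implicit Arguments. Unset Strict Implicit. Unset Printing Implicit Defensive.
Import Order.TTheory GRing.Theory Num.Theory.
Local Open Scope ring_scope.

Section Transformer.
Variable R : realType.

Definition relu_mx (m n : nat) (Z : 'M[R]_(m, n)) : 'M[R]_(m, n) :=
  \matrix_(i, j) Num.max (Z i j) 0.

Definition argmax_set (K : nat) (Phi : 'M[R]_(K, K)) (i : 'I_K) : {set 'I_K} :=
  [set k | [forall j, Phi i j <= Phi i k]].

Definition hardmax (K : nat) (Phi : 'M[R]_(K, K)) : 'M[R]_(K, K) :=
  \matrix_(i, k) (if k \in argmax_set Phi i then (#|argmax_set Phi i|%:R)^-1 else 0).

Record head (d : nat) := Head {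
  WQ : 'M[R]_(d, 2); WK : 'M[R]_(d, 2); WV : 'M[R]_(d, d) }.

Definition psi (K d : nat) (h : head d) (X : 'M[R]_(K, d)) (B : 'M[R]_K)
  : 'M[R]_(K, d) :=
  B *m hardmax (X *m WQ h *m (WK h)^T *m X^T) *m X *m WV h.

Record layer (d : nat) := Layer {
  headsA : seq (head d); headsAT : seq (head d); headsI : seq (head d);
  h1 : nat; h2 : nat; h3 : nat;
  W1 : 'M[R]_(d, h1); W2 : 'M[R]_(h1, h2); W3 : 'M[R]_(h2, h3);
  W4 : 'M[R]_(h3, d) }.

Definition f_attn (K d : nat) (L : layer d) (X : 'M[R]_(K, d)) (At : 'M[R]_K)
  : 'M[R]_(K, d) :=
  \sum_(h <- headsA L) psi h X At + \sum_(h <- headsAT L) psi h X At^T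
  + \sum_(h <- headsI L) psi h X 1%:M + X.

Definition f_mlp (K d : nat) (L : layer d) (X : 'M[R]_(K, d)) : 'M[R]_(K, d) :=
  let Z2 := relu_mx (X *m W1 L) in
  let Z3 := relu_mx (Z2 *m W2 L) in
  let Z4 := relu_mx (Z3 *m W3 L) in
  Z4 *m W4 L + X.

Definition apply_layer (K d : nat) (L : layer d) (X : 'M[R]_(K, d)) (At : 'M[R]_K)
  : 'M[R]_(K, d) := f_mlp L (f_attn L X At).

(* Weighted hypergraph with n_v vertices, n_e hyperedges: incidence relation
   inc and edge weights w; A_{ij} = w(e_j) if v_i in e_j, else 0. *)
Definition incidence (nv ne : nat) (inc : 'I_nv -> 'I_ne -> bool) (w : 'I_ne -> R)
  : 'M[R]_(nv, ne) := \matrix_(i, j) (if inc i j then w j else 0).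

(* Padded incidence matrix (0-based indices): At[a,b] = A[a-1,b-1] for
   1 <= a <= n_v, 1 <= b <= n_e, and 0 elsewhere (i.e. row/col 1 in the
   paper's 1-based convention is all zeros). *)
Definition pad_incidence (K nv ne : nat) (A : 'M[R]_(nv, ne)) : 'M[R]_K :=
  \matrix_(a, b)
    (match insub (val a).-1, insub (val b).-1 with
     | Some i, Some j => if ((0 < val a) && (0 < val b))%N then A i j else 0
     | _, _ => 0
     end).

(* The entry X[1,C] (paper's 1-based row 1 = 0-based row 0); this is a
   sum over the single index k with val k = 0 (empty sum if K = 0). *)
Definition top_entry (K d : nat) (X : 'M[R]_(K, d)) (C : 'I_d) : R :=
  \sum_(k : 'I_K | val k == 0%N) X k C.

Definition stores_scalar (K d : nat) (X : 'M[R]_(K, d)) (C : 'I_d) : Prop :=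
  forall i : 'I_K, val i != 0%N -> X i C = 0.

Definition is_Bglobal (K d : nat) (X : 'M[R]_(K, d)) (c : 'I_d) : Prop :=
  forall i : 'I_K, X i c = (if val i == 0%N then 1 else 0).
Definition is_Blocal (K d : nat) (X : 'M[R]_(K, d)) (c : 'I_d) : Prop :=
  forall i : 'I_K, X i c = (if val i == 0%N then 0 else 1).

Definition repeat_add (K d : nat) (X : 'M[R]_(K, d)) (C D : 'I_d) : 'M[R]_(K, d) :=
  \matrix_(i, j) (if j == D then top_entry X C + X i j else X i j).

End Transformer.

From Pilot Require Import Defs.
From HB Require Import structures.
From mathcomp Require Import all_boot all_order all_algebra.
From mathcomp Require Import reals.
Set Implicit Arguments. Unset Strict Implicit. Unset Printing Implicit Defensive.
Import Order.TTheory GRing.Theory Num.Theory.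
Local Open Scope ring_scope.

(* One identity-attention head suffices; the MLP has hidden width 0.
   With query weights e_Bg + e_Bl and key weights e_Bg, the query of every row is the all-ones
   sum B_global + B_local, so the score of row i at column k is B_global[k],
   which is 1 for k = 0 and 0 otherwise.  Hardmax thus selects position 0 in
   every row, the head copies row 0 of X into every row, and the value weights
   e_C e_D^T move its entry X[0, C] into column D; the residual connection
   adds X. *)

Section RepeatAddition.
Variable R : realType.

Lemma argmax_set_strict (K : nat) (Phi : 'M[R]_K) (k0 : 'I_K) :
  (forall i k, k != k0 -> Phi i k < Phi i k0) ->
  forall i, argmax_set Phi i = [set k0].
Proof.
move=> Phi_max i; apply/setP => k; rewrite !inE.
apply/forallP/eqP => [/(_ k0)|-> j].
  by case: (eqVneq k k0) => // /(Phi_max i); rewrite ltNge => /negbTE ->.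
by case: (eqVneq j k0) => [->|/Phi_max/ltW].
Qed.

Lemma hardmax_strict_argmax (K : nat) (Phi : 'M[R]_K) (k0 : 'I_K) :
  (forall i k, k != k0 -> Phi i k < Phi i k0) ->
  hardmax Phi = \matrix_(i, k) (k == k0)%:R.
Proof.
move=> Phi_max; apply/matrixP => i k.
by rewrite !mxE (argmax_set_strict Phi_max) cards1 invr1 inE; case: eqP.
Qed.

Lemma mul_col_indicator_mx (K n : nat) (k0 : 'I_K) (X : 'M[R]_(K, n)) :
  (\matrix_(i, k) (k == k0)%:R : 'M[R]_K) *m X = \matrix_(i, j) X k0 j.
Proof.
apply/matrixP => i j; rewrite !mxE (bigD1 k0) //= big1 => [|k /negbTE nk].
  by rewrite !mxE eqxx mul1r addr0.
by rewrite !mxE nk mul0r.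
Qed.

Lemma mul_mx_delta (m n p : nat) (A : 'M[R]_(m, n)) (c : 'I_n) (e : 'I_p) :
  A *m delta_mx c e = \matrix_(i, j) (if j == e then A i c else 0).
Proof.
apply/matrixP => i j; rewrite !mxE (bigD1 c) //= big1 => [|l /negbTE nl].
  by rewrite !mxE eqxx addr0; case: eqP; rewrite ?mulr1 ?mulr0.
by rewrite !mxE nl mulr0.
Qed.

Lemma mulmx_row_mx0_tr (K d m n : nat) (X : 'M[R]_(K, d)) (u v : 'M[R]_(d, m)) :
  X *m row_mx u (0 : 'M_(d, n)) *m (row_mx v 0)^T *m X^T
  = (X *m u) *m (X *m v)^T.
Proof.
by rewrite tr_row_mx mul_mx_row mul_row_col mulmx0 mul0mx addr0 trmx_mul mulmxA.
Qed.

Definition attn_layer (d : nat) (hs : seq (Defs.head R d)) : layer R d :=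
  @Layer R d [::] [::] hs 0 0 0 0 0 0 0.

Lemma apply_attn_layer (K d : nat) (hs : seq (Defs.head R d))
    (X : 'M[R]_(K, d)) (At : 'M[R]_K) :
  apply_layer (attn_layer hs) X At = \sum_(h <- hs) psi h X 1%:M + X.
Proof.
by rewrite /apply_layer /f_mlp /f_attn thinmx0 mul0mx add0r !big_nil !add0r.
Qed.

Definition broadcast_head (d : nat) (Bg Bl C D : 'I_d) : Defs.head R d :=
  Head (row_mx (delta_mx Bg 0 + delta_mx Bl 0 : 'M_(d, 1)) 0)
       (row_mx (delta_mx Bg 0 : 'M_(d, 1)) 0) (delta_mx C D).

Lemma broadcast_head_scores (K d : nat) (Bg Bl C D : 'I_d) (X : 'M[R]_(K.+1, d)) :
  is_Bglobal X Bg -> is_Blocal X Bl ->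
  let h := broadcast_head Bg Bl C D in
  X *m WQ h *m (WK h)^T *m X^T = \matrix_(i, k) (k == ord0)%:R.
Proof.
move=> XBg XBl /=; rewrite (@mulmx_row_mx0_tr _ _ 1 1) mulmxDr -!colE.
apply/matrixP => i k; rewrite !mxE big_ord1 !mxE XBg XBl XBg.
rewrite -[k == ord0]/(val k == 0%N).
by case: ifP => _; rewrite ?addr0 ?add0r mul1r; case: ifP.
Qed.

Lemma psi_broadcast_head (K d : nat) (Bg Bl C D : 'I_d) (X : 'M[R]_(K.+1, d)) :
  is_Bglobal X Bg -> is_Blocal X Bl ->
  psi (broadcast_head Bg Bl C D) X 1%:M
  = \matrix_(i, j) (if j == D then X ord0 C else 0).
Proof.
move=> XBg XBl; rewrite /psi mul1mx broadcast_head_scores //.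
rewrite (@hardmax_strict_argmax _ _ ord0) => [|i k nk]; last first.
  by rewrite !mxE (negbTE nk) eqxx ltr01.
rewrite mul_col_indicator_mx mul_mx_delta.
by apply/matrixP => i j; rewrite !mxE.
Qed.

Lemma top_entry_ord0 (K d : nat) (X : 'M[R]_(K.+1, d)) (C : 'I_d) :
  top_entry X C = X ord0 C.
Proof. by rewrite /top_entry (big_pred1 ord0). Qed.

End RepeatAddition.

Theorem lemmaC10 (R : realType) (K d : nat) (Bg Bl C D : 'I_d) (Omega : R) :
  0 < Omega -> Bg != Bl ->
  exists L : layer R d,
    forall (nv ne : nat) (inc : 'I_nv -> 'I_ne -> bool) (w : 'I_ne -> R)
           (X : 'M[R]_(K, d)),
      (maxn nv ne < K)%N ->
      (forall i j, `|X i j| <= Omega) ->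
      is_Bglobal X Bg -> is_Blocal X Bl -> stores_scalar X C ->
      apply_layer L X (pad_incidence K (incidence inc w)) = repeat_add X C D.
Proof.
(* The construction is exact. *)
move=> _ _; exists (attn_layer [:: broadcast_head R Bg Bl C D]).
move=> nv ne inc w; case: K => [|K] X; first by rewrite ltn0.
move=> _ _ XBg XBl _.
rewrite apply_attn_layer big_seq1 psi_broadcast_head //.
apply/matrixP => i j; rewrite !mxE top_entry_ord0.
by case: eqP; rewrite ?add0r.
Qed.
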